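(* Let $\rho:A\to C$ and $\sigma:B\to C$ be ring homomorphisms and let $D:=\rho\times_C\sigma=\{(a,b)\in A\times B:\rho(a)=\sigma(b)\}$. Let $p_A:D\to A$ and $p_B:D\to B$ be the restrictions to $D$ of the projections of $A\times B$. The following are equivalent: (i) the set of all ideals of $D$ is totally ordered by inclusion; (ii) at least one of the following holds: (a) $\rho$ is injective and the set of all ideals of $p_B(D)$ is totally ordered by inclusion; (b) $\sigma$ is injective and the set of all ideals of $p_A(D)$ is totally ordered by inclusion.
   Context: All rings are commutative with identity. *)

From HB Require Import structures.
From mathcomp Require Import all_boot all_order all_algebra.
Set Implicit Arguments. Unset Strict Implicit. Unset Printing Implicit Defensive.
Import GRing.Theory.
Local Open Scope ring_scope.

Definition is_ideal_of (R : comPzRingType) (S I : R -> Prop) : Prop :=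
  [/\ (forall x, I x -> S x),
      I 0,
      (forall x y, I x -> I y -> I (x - y)) &
      (forall s x, S s -> I x -> I (s * x))].

Definition ideals_chain (R : comPzRingType) (S : R -> Prop) : Prop :=
  forall I J : R -> Prop, is_ideal_of S I -> is_ideal_of S J ->
    (forall x, I x -> J x) \/ (forall x, J x -> I x).

Definition fibre_prod (A B C : comPzRingType)
  (rho : {rmorphism A -> C}) (sigma : {rmorphism B -> C}) : (A * B)%type -> Prop :=
  fun d => rho d.1 = sigma d.2.

Definition projA_fp (A B C : comPzRingType)
  (rho : {rmorphism A -> C}) (sigma : {rmorphism B -> C}) : A -> Prop :=
  fun a => exists d, fibre_prod rho sigma d /\ d.1 = a.
Definition projB_fp (A B C : comPzRingType)
  (rho : {rmorphism A -> C}) (sigma : {rmorphism B -> C}) : B -> Prop :=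
  fun b => exists d, fibre_prod rho sigma d /\ d.2 = b.

From HB Require Import structures.
From mathcomp Require Import all_boot all_order all_algebra.
Local Open Scope ring_scope.
Import GRing.Theory.
Set Implicit Arguments. Unset Strict Implicit. Unset Printing Implicit Defensive.

(* The projections p_A, p_B are ring morphisms on the subring D, so ideals of
   p_B(D) pull back to ideals of D, with inclusion of pullbacks reflecting
   inclusion: a chain condition on D passes to p_B(D) and p_A(D). The kernels
   of p_B and p_A on D, namely ker(rho) x 0 and 0 x ker(sigma), meet trivially,
   so if they are comparable one of them vanishes, i.e. rho or sigma is
   injective. Conversely, if rho is injective then p_B is injective on D, so
   the ideals of D correspond to those of p_B(D). *)

Definition image_on (R R' : comPzRingType) (S : R -> Prop) (f : R -> R')
    : R' -> Prop :=
  fun y => exists x, S x /\ f x = y.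

Section IdealsUnderMorphism.
Variables (R R' : comPzRingType) (f : {rmorphism R -> R'}) (S : R -> Prop).
Hypotheses (S0 : S 0) (SB : forall x y, S x -> S y -> S (x - y))
  (SM : forall x y, S x -> S y -> S (x * y)).

Lemma is_ideal_preimage J : is_ideal_of (image_on S f) J ->
  is_ideal_of S (fun x => S x /\ J (f x)).
Proof.
case=> _ J0 JB JM; split.
- by move=> x [].
- by rewrite rmorph0.
- by move=> x y [Sx Jx] [Sy Jy]; rewrite rmorphB; split; [exact: SB | exact: JB].
- move=> s x Ss [Sx Jx]; rewrite rmorphM; split; first exact: SM.
  by apply: JM => //; exists s.
Qed.

Lemma is_ideal_image I : is_ideal_of S I ->
  is_ideal_of (image_on S f) (image_on I f).
Proof.
case=> IS I0 IB IM; split.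
- by move=> _ [x [Ix <-]]; exists x; split => //; apply: IS.
- by exists 0; rewrite rmorph0.
- move=> _ _ [x [Ix <-]] [y [Iy <-]].
  by exists (x - y); rewrite rmorphB; split => //; apply: IB.
- move=> _ _ [s [Ss <-]] [x [Ix <-]].
  by exists (s * x); rewrite rmorphM; split => //; apply: IM.
Qed.

Lemma ideals_chain_image : ideals_chain S -> ideals_chain (image_on S f).
Proof.
move=> chS J K iJ iK.
have sub_image L : is_ideal_of (image_on S f) L -> forall y, L y ->
    exists x, S x /\ L (f x) /\ f x = y.
  by case=> LS _ _ _ y Ly; have [x [Sx fx]] := LS y Ly; exists x; rewrite fx.
have [JK|KJ] := chS _ _ (is_ideal_preimage iJ) (is_ideal_preimage iK); [left|right].
- by move=> y /(sub_image J iJ) [x [Sx [Jfx <-]]]; case: (JK x).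
- by move=> y /(sub_image K iK) [x [Sx [Kfx <-]]]; case: (KJ x).
Qed.

Lemma ideals_chain_image_inj :
  (forall x y, S x -> S y -> f x = f y -> x = y) ->
  ideals_chain (image_on S f) -> ideals_chain S.
Proof.
move=> f_inj chfS I J iI iJ.
have reflect_sub (K L : R -> Prop) : is_ideal_of S K -> is_ideal_of S L ->
    (forall y, image_on K f y -> image_on L f y) -> forall x, K x -> L x.
  case=> KS _ _ _ [LS _ _ _] KL x Kx.
  have [x' [Lx' fx']] := KL (f x) (ex_intro _ x (conj Kx erefl)).
  by rewrite -(f_inj x' x (LS x' Lx') (KS x Kx) fx').
have [IJ|JI] := chfS _ _ (is_ideal_image iI) (is_ideal_image iJ).
- by left; exact: reflect_sub.
- by right; exact: reflect_sub.
Qed.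

Lemma is_ideal_ker_on : is_ideal_of S (fun x => S x /\ f x = 0).
Proof.
split.
- by move=> x [].
- by rewrite rmorph0.
- move=> x y [Sx fx] [Sy fy].
  by rewrite rmorphB fx fy subr0; split => //; exact: SB.
- by move=> s x Ss [Sx fx]; rewrite rmorphM fx mulr0; split => //; exact: SM.
Qed.

Lemma inj_on_of_ker_on : (forall x, S x -> f x = 0 -> x = 0) ->
  forall x y, S x -> S y -> f x = f y -> x = y.
Proof.
move=> ker0 x y Sx Sy fxy; apply/subr0_eq/ker0; first exact: SB.
by rewrite rmorphB fxy subrr.
Qed.

End IdealsUnderMorphism.

Lemma ideals_chain_meet_eq0 (R : comPzRingType) (S I J : R -> Prop) :
  ideals_chain S -> is_ideal_of S I -> is_ideal_of S J ->
  (forall x, I x -> J x -> x = 0) ->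
  (forall x, I x -> x = 0) \/ (forall x, J x -> x = 0).
Proof.
move=> chS iI iJ meet0; have [IJ|JI] := chS _ _ iI iJ; [left|right].
- by move=> x Ix; exact: meet0 (IJ x Ix).
- by move=> x Jx; exact: meet0 (JI x Jx) Jx.
Qed.

Section FibreProduct.
Variables (A B C : comPzRingType)
  (rho : {rmorphism A -> C}) (sigma : {rmorphism B -> C}).
Local Notation D := (fibre_prod rho sigma).

Lemma fibre_prod0 : D 0.
Proof. by rewrite /fibre_prod /= !rmorph0. Qed.

Lemma fibre_prodB d e : D d -> D e -> D (d - e).
Proof. by rewrite /fibre_prod /= !rmorphB => -> ->. Qed.

Lemma fibre_prodM d e : D d -> D e -> D (d * e).
Proof. by rewrite /fibre_prod /= !rmorphM => -> ->. Qed.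

Lemma fibre_prod_ker_snd :
  (forall d, D d -> d.2 = 0 -> d = 0) <-> injective rho.
Proof.
split=> [ker0 | rho_inj [a b] Dd /= b0].
- apply: raddf_inj => a rhoa0.
  have Da0 : D (a, 0) by rewrite /fibre_prod /= rhoa0 rmorph0.
  by have [] := ker0 _ Da0 erefl.
- by move: Dd; rewrite /fibre_prod /= b0 rmorph0 -(rmorph0 rho) => /rho_inj ->.
Qed.

Lemma fibre_prod_ker_fst :
  (forall d, D d -> d.1 = 0 -> d = 0) <-> injective sigma.
Proof.
split=> [ker0 | sigma_inj [a b] Dd /= a0].
- apply: raddf_inj => b sigmab0.
  have D0b : D (0, b) by rewrite /fibre_prod /= sigmab0 rmorph0.
  by have [] := ker0 _ D0b erefl.
- move: Dd; rewrite /fibre_prod /= a0 rmorph0 -(rmorph0 sigma).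
  by move=> /esym/sigma_inj ->.
Qed.

End FibreProduct.

Theorem proposition4p9 (A B C : comPzRingType)
  (rho : {rmorphism A -> C}) (sigma : {rmorphism B -> C}) :
  ideals_chain (fibre_prod rho sigma) <->
  ((injective rho /\ ideals_chain (projB_fp rho sigma)) \/
   (injective sigma /\ ideals_chain (projA_fp rho sigma))).
Proof.
have D0 := fibre_prod0 rho sigma; have DB := @fibre_prodB _ _ _ rho sigma.
have DM := @fibre_prodM _ _ _ rho sigma.
have kerA := is_ideal_ker_on fst D0 DB DM.
have kerB := is_ideal_ker_on snd D0 DB DM.
split=> [chD | [[rho_inj chB] | [sigma_inj chA]]].
- have meet0 d : (fibre_prod rho sigma d /\ d.2 = 0) ->
      (fibre_prod rho sigma d /\ d.1 = 0) -> d = 0.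
    by case: d => a b [_ /= ->] [_ /= ->].
  have [kerB0 | kerA0] := ideals_chain_meet_eq0 chD kerB kerA meet0.
  + left; split.
      by apply/(fibre_prod_ker_snd rho sigma) => d Dd d2; exact: kerB0.
    exact: (ideals_chain_image (f := snd) D0 DB DM chD).
  + right; split.
      by apply/(fibre_prod_ker_fst rho sigma) => d Dd d1; exact: kerA0.
    exact: (ideals_chain_image (f := fst) D0 DB DM chD).
- apply: (ideals_chain_image_inj (f := snd) _ chB).
  by apply: inj_on_of_ker_on DB _; exact: (fibre_prod_ker_snd rho sigma).2.
- apply: (ideals_chain_image_inj (f := fst) _ chA).
  by apply: inj_on_of_ker_on DB _; exact: (fibre_prod_ker_fst rho sigma).2.
Qed.
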